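(* Assume (i) the subpolynomial prime gap hypothesis: for every real $\delta>0$ there exists $x_0$ such that for every natural number $x\ge x_0$ there is a prime $p$ with $x-x^{\delta}<p\le x$; and (ii) the Sidon upper bound hypothesis: for every real $\varepsilon>0$ there exist $C\ge0$ and $N_0\in\mathbb{N}$ with $h(N)\le\sqrt{N}+CN^{\varepsilon}$ for all $N\ge N_0$. Then for every real $\varepsilon>0$ there exist $C\ge0$ and $N_0\in\mathbb{N}$ such that $|h(N)-\sqrt{N}|\le C N^{\varepsilon}$ for all $N\ge N_0$.
   Context: A finite set $A\subseteq\mathbb{Z}$ is Sidon if $a+b=c+d$ with $a,b,c,d\in A$ implies $\{a,b\}=\{c,d\}$ as unordered pairs. For a natural number $N$, $h(N)=\max\{|A| : A\subseteq\{1,\dots,N\},\ A\text{ Sidon}\}$. *)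

From Stdlib Require Import Reals.
From mathcomp Require Import all_boot.
Set Implicit Arguments. Unset Strict Implicit. Unset Printing Implicit Defensive.

Definition sidon (n : nat) (A : {set 'I_n}) : bool :=
  [forall a in A, forall b in A, forall c in A, forall d in A,
     (val a + val b == val c + val d)%N ==>
     (((a == c) && (b == d)) || ((a == d) && (b == c)))].

(* h(N) = max{|A| : A subset {1,...,N}, A Sidon}.  Subsets of {1..N} are
   represented as subsets of 'I_(N+1) = {0..N} not containing 0. *)
Definition h (N : nat) : nat :=
  \max_(A : {set 'I_N.+1} | sidon A && (ord0 \notin A)) #|A|.

(* Real power N^e for a natural N >= 1 (we only use N >= 1 / x >= x0 > 0). *)
Definition rpow (x : nat) (e : R) : R := Rpower (INR x) e.

(* Ruzsa's construction: if g generates the multiplicative group of F_p, the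
   residues c_i mod p(p-1) with c_i = g^i (mod p) and c_i = i (mod p-1),
   0 <= i < p-1, form a Sidon set, because a sum c_i + c_j determines both
   g^i + g^j and g^i g^j = g^(i+j), hence the pair {g^i, g^j}.  So h(N) >= p-1
   whenever p(p-1) <= N.  Taking p a prime just below floor(sqrt N), the
   prime gap hypothesis gives p - 1 >= sqrt N - O(N^eps), and the Sidon upper
   bound hypothesis supplies the other inequality. *)

From Stdlib Require Import Reals Lra.
From mathcomp Require Import all_boot all_algebra cyclic finfield ring zify.
Import GRing.Theory.
Set Implicit Arguments. Unset Strict Implicit.

Section FieldFacts.
Local Open Scope ring_scope.

Lemma finField_prim_root_exists (F : finFieldType) :
  exists z : F, (#|F|.-1).-primitive_root z.
Proof.
have F_gt1 : (1 < #|F|)%N by rewrite (cardD1 0) (cardD1 1) !inE oner_neq0.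
have n_gt0 : (0 < #|F|.-1)%N by rewrite -subn1 subn_gt0.
pose units := enum (predC1 (0 : F)).
suff /hasP[z _ z_prim] : has (#|F|.-1).-primitive_root units by exists z.
apply: has_prim_root n_gt0 _ (enum_uniq _) _.
- apply/allP => x; rewrite mem_enum /= => x_neq0; rewrite unity_rootE; apply/eqP.
  apply: (mulIf x_neq0); rewrite mul1r -exprSr prednK ?expf_card //.
  exact: ltnW.
- by rewrite -cardE cardC1.
Qed.

Lemma eq_pair_of_sum_prod (R : idomainType) (u v s t : R) :
  u + v = s + t -> u * v = s * t -> (u = s /\ v = t) \/ (u = t /\ v = s).
Proof.
move=> sum_eq prod_eq.
have : (u - s) * (u - t) = 0.
  have -> : (u - s) * (u - t) = u * u - u * (s + t) + s * t by ring.
  by rewrite -sum_eq -prod_eq; ring.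
move/eqP; rewrite mulf_eq0 !subr_eq0 => /orP[/eqP us | /eqP ut].
  by left; split => //; apply: (addrI u); rewrite sum_eq us.
by right; split => //; apply: (addrI u); rewrite sum_eq ut addrC.
Qed.

Lemma natr_Fp p (x : 'F_p) : prime p -> x%:R = x.
Proof.
move=> p_pr; apply: val_inj; rewrite /= val_Fp_nat // modn_small //.
by have := ltn_ord x; rewrite [X in (_ < X)%N -> _]Fp_cast.
Qed.

End FieldFacts.

Definition sidon_family n (c : 'I_n -> nat) : Prop :=
  forall i j k l, (c i + c j = c k + c l)%N -> (i = k /\ j = l) \/ (i = l /\ j = k).

Lemma sidon_family_inj n (c : 'I_n -> nat) : sidon_family c -> injective c.
Proof. by move=> c_sidon i j cij; have [[] | []] := c_sidon i i j j (congr2 addn cij cij). Qed.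

Lemma h_ge_sidon_family N n (c : 'I_n -> nat) :
  sidon_family c -> (forall i, c i < N)%N -> (n <= h N)%N.
Proof.
move=> c_sidon c_lt.
pose shift i : 'I_N.+1 := inord (c i).+1.
have shiftE i : val (shift i) = (c i).+1 by apply: inordK; rewrite ltnS.
have shift_inj : injective shift.
  by move=> i j /(congr1 val); rewrite !shiftE => -[/(sidon_family_inj c_sidon)].
rewrite -[n]card_ord -(card_imset _ shift_inj).
apply: (leq_bigmax_cond (F := fun A : {set 'I_N.+1} => #|A|)); apply/andP; split.
  apply/forall_inP => _ /imsetP[i _ ->]; apply/forall_inP => _ /imsetP[j _ ->].
  apply/forall_inP => _ /imsetP[k _ ->]; apply/forall_inP => _ /imsetP[l _ ->].
  apply/implyP => /eqP; rewrite !shiftE !addSn !addnS => -[/c_sidon].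
  by case=> -[-> ->]; rewrite !eqxx ?orbT.
by apply/imsetP => -[i _ /(congr1 val)]; rewrite shiftE.
Qed.

Section RuzsaSidonSet.
Local Open Scope ring_scope.

Variables (p : nat) (g : 'F_p).
Hypotheses (p_pr : prime p) (g_prim : (p.-1).-primitive_root g).

Definition ruzsa (i : nat) : nat := (chinese p p.-1 (g ^+ i) i %% (p * p.-1))%N.

Let p_gt1 : (1 < p)%N := prime_gt1 p_pr.

Lemma ruzsa_lt i : (ruzsa i < p * p.-1)%N.
Proof. by rewrite ltn_mod muln_gt0 -subn1 subn_gt0 p_gt1 ltnW. Qed.

Lemma ruzsa_modr i : (ruzsa i = i %[mod p.-1])%N.
Proof. by rewrite modn_dvdm ?dvdn_mull // chinese_modr // coprimenP // ltnW. Qed.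

Lemma natr_ruzsa i : (ruzsa i)%:R = g ^+ i :> 'F_p.
Proof.
rewrite -(Fp_nat_mod p_pr) /ruzsa modn_dvdm ?dvdn_mulr //.
rewrite chinese_modl; last exact: coprimenP (ltnW p_gt1).
by rewrite (Fp_nat_mod p_pr) natr_Fp.
Qed.

Lemma ruzsa_sidon : sidon_family (fun i : 'I_p.-1 => ruzsa i).
Proof.
move=> i j k l sum_eq.
have exp_inj (x y : 'I_p.-1) : g ^+ x = g ^+ y -> x = y.
  by move/eqP; rewrite (eq_prim_root_expr g_prim) !modn_small // => /eqP/val_inj.
have sumF : g ^+ i + g ^+ j = g ^+ k + g ^+ l.
  rewrite -(natr_ruzsa i) -(natr_ruzsa j) -(natr_ruzsa k) -(natr_ruzsa l).
  by rewrite -!natrD sum_eq.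
have prodF : g ^+ i * g ^+ j = g ^+ k * g ^+ l.
  rewrite -!exprD; apply/eqP; rewrite (eq_prim_root_expr g_prim).
  rewrite -modnDm -(modnDm k) -(ruzsa_modr i) -(ruzsa_modr j).
  by rewrite -(ruzsa_modr k) -(ruzsa_modr l) !modnDm sum_eq.
by case: (eq_pair_of_sum_prod sumF prodF) => -[/exp_inj-> /exp_inj->]; [left | right].
Qed.
End RuzsaSidonSet.

Lemma h_ge_pred_prime N p : prime p -> (p * p.-1 <= N)%N -> (p.-1 <= h N)%N.
Proof.
move=> p_pr pp_le; have [g g_prim] := finField_prim_root_exists 'F_p.
rewrite card_Fp // in g_prim.
apply: h_ge_sidon_family (ruzsa_sidon p_pr g_prim) _ => i.
by apply: leq_trans pp_le; apply: ruzsa_lt.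
Qed.

Open Scope R_scope.

Lemma rpow_ge1 x e : (0 < x)%N -> 0 <= e -> 1 <= rpow x e.
Proof.
move=> /leP/le_INR x_ge1 e_ge0; simpl in x_ge1.
by rewrite /rpow -(Rpower_O (INR x)); [apply: Rle_Rpower | lra].
Qed.

Lemma rpow_le x y e : (0 < x)%N -> (x <= y)%N -> 0 <= e -> rpow x e <= rpow y e.
Proof.
move=> /leP/lt_INR x_gt0 /leP/le_INR x_le_y e_ge0.
apply: Rle_Rpower_l => //; simpl in x_gt0; lra.
Qed.

Lemma sqrt_INR_le_isqrt N : sqrt (INR N) <= INR (Nat.sqrt N) + 1.
Proof.
have [_ lt_sq] := Nat.sqrt_spec N (Nat.le_0_l N).
rewrite -[INR _ + 1]sqrt_square; last by have := pos_INR (Nat.sqrt N); lra.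
by apply: sqrt_le_1_alt; rewrite -S_INR -mult_INR; apply/le_INR/Nat.lt_le_incl.
Qed.

Lemma h_ge_sqrt_sub_rpow delta x0 :
  0 <= delta ->
  (forall x : nat, (x0 <= x)%N ->
     exists p : nat, prime p /\ INR x - rpow x delta < INR p /\ (p <= x)%N) ->
  forall N, (x0.+1 * x0.+1 <= N)%N -> sqrt (INR N) - 3 * rpow N delta <= INR (h N).
Proof.
move=> delta_ge0 prime_gaps N N_large.
have sqrtN_le := sqrt_INR_le_isqrt N.
have [sq_le sq_lt] := Nat.sqrt_spec N (Nat.le_0_l N).
move: (Nat.sqrt N) sq_le sq_lt sqrtN_le => x sq_le sq_lt sqrtN_le.
have x_gt_x0 : (x0 < x)%N by nia.
have x_le_N : (x <= N)%N by nia.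
have [p [p_pr [p_near p_le]]] := prime_gaps x (ltnW x_gt_x0).
have p_le_h : INR p <= INR (h N) + 1.
  have : (p.-1 <= h N)%N by apply: h_ge_pred_prime p_pr _; nia.
  have := prime_gt0 p_pr; rewrite -S_INR => p_gt0 ?; apply/le_INR/leP; lia.
have : rpow x delta <= rpow N delta by apply: rpow_le => //; lia.
have : 1 <= rpow N delta by apply: rpow_ge1 => //; lia.
lra.
Qed.

Theorem mainTheorem15 :
  (* (i) subpolynomial prime gaps *)
  (forall delta : R, 0 < delta ->
     exists x0 : nat, forall x : nat, (x0 <= x)%N ->
       exists p : nat, prime p /\ INR x - rpow x delta < INR p /\ (p <= x)%N) ->
  (* (ii) Sidon upper bound *)
  (forall eps : R, 0 < eps ->
     exists (C : R) (N0 : nat), 0 <= C /\ forall N : nat, (N0 <= N)%N ->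
       INR (h N) <= sqrt (INR N) + C * rpow N eps) ->
  forall eps : R, 0 < eps ->
    exists (C : R) (N0 : nat), 0 <= C /\ forall N : nat, (N0 <= N)%N ->
      Rabs (INR (h N) - sqrt (INR N)) <= C * rpow N eps.
Proof.
move=> prime_gaps sidon_upper eps eps_gt0.
have [C [N1 [C_ge0 h_le]]] := sidon_upper eps eps_gt0.
have [x0 gaps_from_x0] := prime_gaps eps eps_gt0.
exists (Rmax C 3), (maxn N1 (x0.+1 * x0.+1)); split.
  exact: Rle_trans C_ge0 (Rmax_l C 3).
move=> N; rewrite geq_max => /andP[N1_le x0_le].
have lower := h_ge_sqrt_sub_rpow (Rlt_le _ _ eps_gt0) gaps_from_x0 x0_le.
have upper := h_le N N1_le.
have r_ge0 : 0 <= rpow N eps by apply: Rlt_le; apply: exp_pos.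
have := Rmult_le_compat_r _ _ _ r_ge0 (Rmax_l C 3).
have := Rmult_le_compat_r _ _ _ r_ge0 (Rmax_r C 3).
move=> ? ?; apply: Rabs_le; lra.
Qed.
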